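(* The class of minus-algebras is a proper quasivariety: it is not closed under homomorphic images, so it cannot be axiomatised by identities alone.
   Context: A minus-algebra is an algebra $(A,\circ,-)$ with two binary operations satisfying: $x\circ y=y-(y-x)$; $(A,\circ)$ is a right normal band (a semigroup with $x\circ x=x$ and $(x\circ y)\circ z=(y\circ x)\circ z$); there is an element $0$ with $x-x=0$ for all $x$; $x\circ0=0\circ x=0$; $(x-y)\circ x=x-y$; $(x-y)\circ y=0$; $(x-y)\circ z=(x\circ z)-y$; and the quasi-identity $s-x=t-x\ \&\ x\circ s=x\circ t\Rightarrow s=t$. *)

(* A minus-algebra: (A, circ, minus) with two binary operations satisfying
   the axioms of the paper.  The constant 0 is existentially quantified
   (it is not part of the signature). *)
Definition is_minus_algebra (A : Type) (circ minus : A -> A -> A) : Prop :=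
  (forall x y, circ x y = minus y (minus y x)) /\
  (forall x y z, circ (circ x y) z = circ x (circ y z)) /\
  (forall x, circ x x = x) /\
  (forall x y z, circ (circ x y) z = circ (circ y x) z) /\
  (exists zero : A,
     (forall x, minus x x = zero) /\
     (forall x, circ x zero = zero /\ circ zero x = zero) /\
     (forall x y, circ (minus x y) y = zero)) /\
  (forall x y, circ (minus x y) x = minus x y) /\
  (forall x y z, circ (minus x y) z = minus (circ x z) y) /\
  (forall s t x, minus s x = minus t x -> circ x s = circ x t -> s = t).

Definition is_hom {A B : Type} (circA minusA : A -> A -> A)
  (circB minusB : B -> B -> B) (f : A -> B) : Prop :=
  (forall x y, f (circA x y) = circB (f x) (f y)) /\
  (forall x y, f (minusA x y) = minusB (f x) (f y)).

Definition surjective {A B : Type} (f : A -> B) : Prop :=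
  forall b, exists a, f a = b.

(* Let M = {0, a, b} be the minus-algebra in which x o y = y for x <> 0,
   and x - y = x for y = 0, x - y = 0 otherwise; then A = M x M is a
   minus-algebra.  Collapse A by the congruence generated by
   (a, a) ~ (b, b): it also identifies (a, 0) ~ (b, 0) and (0, a) ~ (0, b).
   In the six-element quotient the classes s = [(a, b)] and t = [(b, a)]
   stay distinct, yet with x = [(a, 0)] both s - x = t - x = [(0, a)] and
   x o s = x o t = [(a, 0)], so the quasi-identity fails there. *)


Definition prod_op {A B : Type} (opA : A -> A -> A) (opB : B -> B -> B) (x y : A * B) : A * B :=
  (opA (fst x) (fst y), opB (snd x) (snd y)).

Lemma is_minus_algebra_prod (A B : Type) (circA minusA : A -> A -> A)
  (circB minusB : B -> B -> B) :
  is_minus_algebra A circA minusA -> is_minus_algebra B circB minusB ->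
  is_minus_algebra (A * B) (prod_op circA circB) (prod_op minusA minusB).
Proof.
  intros (circA_def & circA_assoc & circA_id & circA_rnormal &
          (zA & minusA_self & circA_zero & minusA_circ_r) &
          minusA_circ_l & minusA_circ & quasiA).
  intros (circB_def & circB_assoc & circB_id & circB_rnormal &
          (zB & minusB_self & circB_zero & minusB_circ_r) &
          minusB_circ_l & minusB_circ & quasiB).
  unfold is_minus_algebra, prod_op.
  repeat split.
  5: exists (zA, zB); repeat split.
  all: intros; repeat match goal with p : prod _ _ |- _ => destruct p end; cbn in *.
  all: try solve [f_equal; auto; apply circA_zero || apply circB_zero].
  match goal with
  | Hm : pair _ _ = pair _ _, Hc : pair _ _ = pair _ _ |- _ =>
      injection Hm as Hm1 Hm2; injection Hc as Hc1 Hc2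
  end.
  f_equal; [apply (quasiA _ _ _ Hm1 Hc1) | apply (quasiB _ _ _ Hm2 Hc2)].
Qed.

Definition opt_circ (x y : option bool) : option bool :=
  match x with None => None | Some _ => y end.

Definition opt_minus (x y : option bool) : option bool :=
  match y with None => x | Some _ => None end.

Lemma is_minus_algebra_opt : is_minus_algebra (option bool) opt_circ opt_minus.
Proof.
  unfold is_minus_algebra.
  repeat split.
  5: exists None; repeat split.
  all: intros; repeat match goal with x : option bool |- _ => destruct x as [[|]|] end;
    cbn in *; congruence.
Qed.

Definition A2 : Type := option bool * option bool.
Definition circA2 : A2 -> A2 -> A2 := prod_op opt_circ opt_circ.
Definition minusA2 : A2 -> A2 -> A2 := prod_op opt_minus opt_minus.

Inductive B6 := cls0 | clsL | clsR | clsEq | clsTF | clsFT.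

Definition quot (x : A2) : B6 :=
  match x with
  | (None, None) => cls0
  | (Some _, None) => clsL
  | (None, Some _) => clsR
  | (Some true, Some true) | (Some false, Some false) => clsEq
  | (Some true, Some false) => clsTF
  | (Some false, Some true) => clsFT
  end.

Definition repr (c : B6) : A2 :=
  match c with
  | cls0 => (None, None)
  | clsL => (Some true, None)
  | clsR => (None, Some true)
  | clsEq => (Some true, Some true)
  | clsTF => (Some true, Some false)
  | clsFT => (Some false, Some true)
  end.

(* The operations of the quotient are computed on representatives;
   [quot_hom] is exactly the statement that this is well defined. *)
Definition circB6 (c d : B6) : B6 := quot (circA2 (repr c) (repr d)).
Definition minusB6 (c d : B6) : B6 := quot (minusA2 (repr c) (repr d)).

Lemma quot_hom : is_hom circA2 minusA2 circB6 minusB6 quot.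
Proof.
  split; intros [[[|]|] [[|]|]] [[[|]|] [[|]|]]; reflexivity.
Qed.

Lemma quot_surjective : surjective quot.
Proof. intros c; exists (repr c); destruct c; reflexivity. Qed.

Lemma not_is_minus_algebra_B6 : ~ is_minus_algebra B6 circB6 minusB6.
Proof.
  intros (_ & _ & _ & _ & _ & _ & _ & quasi).
  (* [clsTF - clsL = clsFT - clsL = clsR] and [clsL o clsTF = clsL o clsFT = clsL]. *)
  discriminate (quasi clsTF clsFT clsL eq_refl eq_refl).
Qed.

Theorem proposition5p2 :
  exists (A B : Type) (circA minusA : A -> A -> A) (circB minusB : B -> B -> B)
         (f : A -> B),
    is_minus_algebra A circA minusA /\
    is_hom circA minusA circB minusB f /\
    surjective f /\
    ~ is_minus_algebra B circB minusB.
Proof.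
  exists A2, B6, circA2, minusA2, circB6, minusB6, quot.
  split.
  - apply is_minus_algebra_prod; apply is_minus_algebra_opt.
  - exact (conj quot_hom (conj quot_surjective not_is_minus_algebra_B6)).
Qed.
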